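(* Let $G$ be a word hyperbolic group and $0\to\mathbb Z\xrightarrow{\iota}E\xrightarrow{\pi}G\to1$ a central extension, $X$ a finite set mapping onto a symmetric generating set of $E$ (evaluation $w\mapsto\overline w\in E$). Let $C>0$ be an integer such that for every $g\in G$ the maximum $\max\{\overline w\,\iota(-C\,\mathrm{len}(w)): w\in X^*,\ \pi(\overline w)=g\}$ exists in the ordered fibre $\pi^{-1}(g)$, and define $\rho:G\to E$ by letting $\rho(g)$ be this maximum. Then for all $g\in G$ and $x\in X$: (1) $|\rho(g)\overline x-\rho(g\pi(\overline x))|\le C$; (2) $|\overline x\rho(g)-\rho(\pi(\overline x)g)|\le C$.
   Context: The order on a fibre $\pi^{-1}(g)$: $h_1\le h_2$ iff $h_2h_1^{-1}=\iota(n)$ with $n\ge0$. For $h_1,h_2$ in the same fibre, $h_1-h_2$ denotes the integer $n$ with $\iota(n)=h_1h_2^{-1}$. *)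

(* Abstract (possibly infinite) groups are given as a record
   with their operations and axioms, since MathComp only has finite groups. *)
From Stdlib Require List.
From mathcomp Require Import all_boot all_order all_algebra.
Set Implicit Arguments. Unset Strict Implicit. Unset Printing Implicit Defensive.
Import Order.TTheory GRing.Theory Num.Theory.
Local Open Scope ring_scope.

Record AGroup := MkGroup {
  gcar :> Type;
  gmul : gcar -> gcar -> gcar;
  gone : gcar;
  ginv : gcar -> gcar;
  gmulA : forall a b c, gmul a (gmul b c) = gmul (gmul a b) c;
  gmul1l : forall a, gmul gone a = a;
  gmul1r : forall a, gmul a gone = a;
  gmulVl : forall a, gmul (ginv a) a = gone;
  gmulVr : forall a, gmul a (ginv a) = gone
}.

Arguments gmul {a0}. Arguments gone {a0}. Arguments ginv {a0}.

Definition weval (G : AGroup) (A : Type) (ev : A -> G) (w : seq A) : G :=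
  foldr (fun a acc => gmul (ev a) acc) gone w.

Definition word_over (G : AGroup) (S : seq G) (w : seq G) : Prop :=
  List.Forall (fun s => List.In s S) w.

Definition fin_sym_gen_set (G : AGroup) (S : seq G) : Prop :=
  (forall s, List.In s S -> List.In (ginv s) S) /\
  (forall g : G, exists w, word_over S w /\ weval id w = g).

Definition word_dist (G : AGroup) (S : seq G) (a b : G) (n : nat) : Prop :=
  (exists w, word_over S w /\ weval id w = gmul (ginv a) b /\ size w = n) /\
  (forall w, word_over S w -> weval id w = gmul (ginv a) b -> (n <= size w)%N).

(* Gromov hyperbolicity of the word metric (four-point condition on the
   vertices of the Cayley graph, with doubled Gromov products
   2(x|y)_p = d(x,p) + d(y,p) - d(x,y)):
   (x|z)_p >= min((x|y)_p, (y|z)_p) - delta. *)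
Definition delta_hyperbolic (G : AGroup) (S : seq G) (delta : nat) : Prop :=
  forall (x y z p : G) (dxp dyp dzp dxy dyz dxz : nat),
    word_dist S x p dxp -> word_dist S y p dyp -> word_dist S z p dzp ->
    word_dist S x y dxy -> word_dist S y z dyz -> word_dist S x z dxz ->
    Num.min (dxp%:Z + dyp%:Z - dxy%:Z) (dyp%:Z + dzp%:Z - dyz%:Z)
      - 2 * delta%:Z <= dxp%:Z + dzp%:Z - dxz%:Z.

Definition word_hyperbolic (G : AGroup) : Prop :=
  exists (S : seq G) (delta : nat), fin_sym_gen_set S /\ delta_hyperbolic S delta.

Definition central_extension (E G : AGroup) (iota : int -> E) (pi : E -> G) : Prop :=
  (forall m n : int, iota (m + n) = gmul (iota m) (iota n)) /\
  injective iota /\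
  (forall (n : int) (e : E), gmul (iota n) e = gmul e (iota n)) /\
  (forall a b : E, pi (gmul a b) = gmul (pi a) (pi b)) /\
  (forall g : G, exists e, pi e = g) /\
  (forall e : E, pi e = gone <-> exists n, iota n = e).

Definition fib_le (E : AGroup) (iota : int -> E) (h1 h2 : E) : Prop :=
  exists n : int, 0 <= n /\ iota n = gmul h2 (ginv h1).

(* |h1 - h2| <= C, where h1 - h2 is the integer n with iota n = h1 h2^-1. *)
Definition fib_dist_le (E : AGroup) (iota : int -> E) (h1 h2 : E) (C : int) : Prop :=
  exists n : int, iota n = gmul h1 (ginv h2) /\ `|n| <= C.

Definition cand (E G : AGroup) (iota : int -> E) (pi : E -> G) (X : finType)
    (ev : X -> E) (C : int) (g : G) (h : E) : Prop :=
  exists w : seq X, pi (weval ev w) = g /\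
    h = gmul (weval ev w) (iota (- (C * (size w)%:Z))).

Definition is_cand_max (E G : AGroup) (iota : int -> E) (pi : E -> G) (X : finType)
    (ev : X -> E) (C : int) (g : G) (h : E) : Prop :=
  cand iota pi ev C g h /\ (forall h', cand iota pi ev C g h' -> fib_le iota h' h).

(** Write [h <= h'] for the fibre order and [x] for [ev x]. If [w] realises
    [rho g], then [w x] is a word over [g x], so [rho g x iota(-C)] is a
    candidate for [g x] and lies below [rho (g x)]. Symmetrically, appending a
    letter representing [x^-1] to a word realising [rho (g x)] shows
    [rho (g x) x^-1 iota(-C) <= rho g]. Both fibre differences involved are the
    same integer up to sign, so it lies in [[-C, C]]; left multiplication is
    handled the same way, using that [iota] is central. Hyperbolicity of [G],
    the positivity of [C] and the generation of [E] by [X] only serve to make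
    the maxima [rho g] exist, which is assumed here, so they are unused. *)
From mathcomp Require Import all_boot all_order all_algebra zify.
Import Order.TTheory GRing.Theory Num.Theory.
Local Open Scope ring_scope.
Set Implicit Arguments. Unset Strict Implicit.

Section GroupLemmas.
Variable G : AGroup.
Implicit Types a b c : G.

Lemma gmulI a : injective (gmul a).
Proof. by move=> b c /(f_equal (gmul (ginv a))); rewrite !gmulA gmulVl !gmul1l. Qed.

Lemma ginv_unique a b : gmul a b = gone -> ginv a = b.
Proof. by move=> ab1; apply: (@gmulI a); rewrite gmulVr ab1. Qed.

Lemma ginvM a b : ginv (gmul a b) = gmul (ginv b) (ginv a).
Proof. by apply: ginv_unique; rewrite gmulA -(gmulA a) gmulVr gmul1r gmulVr. Qed.

Lemma ginvK a : ginv (ginv a) = a.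
Proof. by apply: ginv_unique; rewrite gmulVl. Qed.

Lemma weval_rcons (A : Type) (ev : A -> G) w x :
  weval ev (rcons w x) = gmul (weval ev w) (ev x).
Proof. by elim: w => [|y w IHw] /=; rewrite ?gmul1l ?gmul1r // IHw gmulA. Qed.

End GroupLemmas.

Section CentralExtension.
Variables (E G : AGroup) (iota : int -> E) (pi : E -> G).
Hypothesis ext : central_extension iota pi.

Lemma iotaD m n : iota (m + n) = gmul (iota m) (iota n).
Proof. by case: ext. Qed.

Lemma iota_inj : injective iota.
Proof. by case: ext => _ []. Qed.

Lemma iota_central n e : gmul (iota n) e = gmul e (iota n).
Proof. by case: ext => _ [_ []]. Qed.

Lemma piM a b : pi (gmul a b) = gmul (pi a) (pi b).
Proof. by case: ext => _ [_ [_ []]]. Qed.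

Lemma iota0 : iota 0 = gone.
Proof. by apply: (@gmulI _ (iota 0)); rewrite -iotaD addr0 gmul1r. Qed.

Lemma iotaN n : ginv (iota n) = iota (- n).
Proof. by apply: ginv_unique; rewrite -iotaD subrr iota0. Qed.

Lemma pi1 : pi gone = gone.
Proof. by apply: (@gmulI _ (pi gone)); rewrite -piM !gmul1r. Qed.

Lemma gmul_iotaAC a n b : gmul (gmul a (iota n)) b = gmul (gmul a b) (iota n).
Proof. by rewrite -gmulA iota_central gmulA. Qed.

Lemma fib_le_mul_iotaN (C : int) u b :
  fib_le iota (gmul u (iota (- C))) b ->
  exists2 n, iota n = gmul u (ginv b) & n <= C.
Proof.
case=> m [m_ge0 iota_m]; exists (C - m); last by lia.
have : gmul b (ginv u) = iota (m - C).
  by rewrite iotaD iota_m ginvM -!gmulA -iota_central (gmulA (ginv _)) gmulVl gmul1l.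
by move/(f_equal ginv); rewrite ginvM ginvK iotaN opprB.
Qed.

Lemma fib_dist_le_of_le (C : int) u b v h :
  fib_le iota (gmul u (iota (- C))) b -> fib_le iota (gmul v (iota (- C))) h ->
  (forall n, iota n = gmul u (ginv b) -> iota (- n) = gmul v (ginv h)) ->
  fib_dist_le iota u b C.
Proof.
move=> /fib_le_mul_iotaN[n iota_n n_le] /fib_le_mul_iotaN[m iota_m m_le] opp_diff.
have m_eq : m = - n by apply: iota_inj; rewrite iota_m opp_diff.
by exists n; split; last by rewrite ler_norml; apply/andP; split; lia.
Qed.

Variables (X : finType) (ev : X -> E) (C : int).

Lemma iota_mul_sizeS (k : nat) :
  iota (- (C * k.+1%:Z)) = gmul (iota (- (C * k%:Z))) (iota (- C)).
Proof. by rewrite -iotaD; congr iota; lia. Qed.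

Lemma cand_rcons g h x :
  cand iota pi ev C g h ->
  cand iota pi ev C (gmul g (pi (ev x))) (gmul (gmul h (ev x)) (iota (- C))).
Proof.
case=> w [pi_w ->]; exists (rcons w x).
rewrite weval_rcons piM pi_w size_rcons iota_mul_sizeS.
by rewrite gmul_iotaAC gmulA.
Qed.

Lemma cand_cons g h x :
  cand iota pi ev C g h ->
  cand iota pi ev C (gmul (pi (ev x)) g) (gmul (gmul (ev x) h) (iota (- C))).
Proof.
case=> w [pi_w ->]; exists (x :: w).
by rewrite /= piM pi_w iota_mul_sizeS !gmulA.
Qed.

Variable rho : G -> E.
Hypothesis ev_sym : forall x : X, exists y : X, ev y = ginv (ev x).
Hypothesis rho_max : forall g : G, is_cand_max iota pi ev C g (rho g).

Lemma rho_mulr_dist g x :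
  fib_dist_le iota (gmul (rho g) (ev x)) (rho (gmul g (pi (ev x)))) C.
Proof.
have [y ev_y] := ev_sym x.
set g' := gmul g (pi (ev x)).
have [cand_g _] := rho_max g; have [cand_g' max_g'] := rho_max g'.
apply: (fib_dist_le_of_le (v := gmul (rho g') (ginv (ev x)))).
- exact/max_g'/cand_rcons.
- apply: (proj2 (rho_max g)).
  have := cand_rcons y cand_g'.
  by rewrite ev_y /g' -gmulA -piM gmulVr pi1 gmul1r.
- by move=> n iota_n; rewrite -iotaN iota_n !ginvM ginvK gmulA.
Qed.

Lemma rho_mull_dist g x :
  fib_dist_le iota (gmul (ev x) (rho g)) (rho (gmul (pi (ev x)) g)) C.
Proof.
have [y ev_y] := ev_sym x.
set g' := gmul (pi (ev x)) g.
have [cand_g _] := rho_max g; have [cand_g' max_g'] := rho_max g'.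
apply: (fib_dist_le_of_le (v := gmul (ginv (ev x)) (rho g'))).
- exact/max_g'/cand_cons.
- apply: (proj2 (rho_max g)).
  have := cand_cons y cand_g'.
  by rewrite ev_y /g' gmulA -piM gmulVl pi1 gmul1l.
- move=> n iota_n.
  have hb : gmul (rho g) (ginv (rho g')) = gmul (ginv (ev x)) (iota n).
    by rewrite iota_n !gmulA gmulVl gmul1l.
  rewrite -gmulA -[gmul (rho g') _]ginvK ginvM ginvK hb ginvM ginvK iotaN.
  by rewrite iota_central gmulA gmulVl gmul1l.
Qed.

End CentralExtension.

Theorem lemma2p3 (G E : AGroup) (iota : int -> E) (pi : E -> G)
  (X : finType) (ev : X -> E) (C : int) (rho : G -> E) :
  word_hyperbolic G ->
  central_extension iota pi ->
  (forall x : X, exists y : X, ev y = ginv (ev x)) ->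
  (forall e : E, exists w : seq X, weval ev w = e) ->
  0 < C ->
  (forall g : G, is_cand_max iota pi ev C g (rho g)) ->
  forall (g : G) (x : X),
    fib_dist_le iota (gmul (rho g) (ev x)) (rho (gmul g (pi (ev x)))) C /\
    fib_dist_le iota (gmul (ev x) (rho g)) (rho (gmul (pi (ev x)) g)) C.
Proof.
move=> _ ext ev_sym _ _ rho_max g x.
split; [exact: (rho_mulr_dist ext ev_sym rho_max) |
        exact: (rho_mull_dist ext ev_sym rho_max)].
Qed.
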